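(* Let $\{M_i\}_{i\in I}$ be a family of complete pointed metric spaces, let $M=\coprod_{i\in I}M_i$ be their metric sum, and let $Y$ be a real Banach space. Then the following are equivalent: (a) $\mathrm{A}(M_i,Y)$ is dense in $\mathrm{Lip}_0(M_i,Y)$ for every $i\in I$; (b) $\mathrm{A}(M,Y)$ is dense in $\mathrm{Lip}_0(M,Y)$.
   Context: Throughout, metric spaces are complete and pointed, with base point $0$. $\mathrm{Lip}_0(M,Y)$ is the Banach space of Lipschitz maps $f:M\to Y$ with $f(0)=0$, normed by $\|f\|=\sup_{p\neq q}\|f(p)-f(q)\|/d(p,q)$. A map $f$ attains its norm toward $y\in Y$ if there is a sequence $(p_n,q_n)$ in $M\times M$ with $p_n\neq q_n$ such that $[f(p_n)-f(q_n)]/d(p_n,q_n)\to y$ and $\|y\|=\|f\|$; $\mathrm{A}(M,Y)$ is the set of $f$ attaining their norm toward some vector. The metric sum $\coprod_{i\in I}M_i$ of pointed metric spaces $(M_i,d_i)$ is the disjoint union of the $M_i$ with all base points identified to a single base point $0$, with metric $d(p,q)=d_i(p,q)$ if $p,q\in M_i$, and $d(p,q)=d_i(p,0)+d_j(0,q)$ if $p\in M_i$, $q\in M_j$, $i\neq j$. *)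

From HB Require Import structures.
From mathcomp Require Import all_boot all_order all_algebra.
From mathcomp Require Import all_classical all_reals all_analysis.
From mathcomp Require Import Rstruct.
From Stdlib Require Rdefinitions.
Set Implicit Arguments. Unset Strict Implicit. Unset Printing Implicit Defensive.
Import Order.TTheory GRing.Theory Num.Theory.
Import numFieldNormedType.Exports.
Local Open Scope classical_set_scope.
Local Open Scope ring_scope.

Notation RR := Rdefinitions.R.

Definition is_metric (T : Type) (d : T -> T -> RR) : Prop :=
  (forall x y, 0 <= d x y) /\
  (forall x y, d x y = 0 <-> x = y) /\
  (forall x y, d x y = d y x) /\
  (forall x y z, d x z <= d x y + d y z).

Definition d_cauchy (T : Type) (d : T -> T -> RR) (u : nat -> T) : Prop :=
  forall eps : RR, 0 < eps -> exists N : nat,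
    forall m n : nat, (N <= m)%N -> (N <= n)%N -> d (u m) (u n) < eps.

Definition d_converges (T : Type) (d : T -> T -> RR) (u : nat -> T) (x : T) : Prop :=
  forall eps : RR, 0 < eps -> exists N : nat,
    forall n : nat, (N <= n)%N -> d (u n) x < eps.

Definition is_complete (T : Type) (d : T -> T -> RR) : Prop :=
  forall u : nat -> T, d_cauchy d u -> exists x, d_converges d u x.

Section Lip.
Variables (T : Type) (d : T -> T -> RR) (t0 : T) (Y : normedModType RR).

Definition Lip0 (f : T -> Y) : Prop :=
  f t0 = 0 /\ exists L : RR, forall p q, `|f p - f q| <= L * d p q.

Definition lipnorm (f : T -> Y) : RR :=
  sup [set r : RR | exists p q, p <> q /\ r = `|f p - f q| / d p q].

Definition attains_norm_toward (f : T -> Y) (y : Y) : Prop :=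
  exists (p q : nat -> T),
    (forall n, p n <> q n) /\
    ((fun n => (d (p n) (q n))^-1 *: (f (p n) - f (q n))) @ \oo --> y) /\
    `|y| = lipnorm f.

Definition NA (f : T -> Y) : Prop :=
  Lip0 f /\ exists y : Y, attains_norm_toward f y.

Definition NA_dense : Prop :=
  forall f : T -> Y, Lip0 f ->
    forall eps : RR, 0 < eps -> exists g : T -> Y, NA g /\ lipnorm (f - g) < eps.

End Lip.

Section MetricSum.
Variables (I : Type) (M : I -> Type) (d : forall i, M i -> M i -> RR)
          (base : forall i, M i).

Definition nonbase := {x : {i : I & M i} | projT2 x <> base (projT1 x)}.

(* carrier of the metric sum: [None] is the common base point *)
Definition msum := option nonbase.

Definition msum_base : msum := None.

Definition msum_dist (p q : msum) : RR :=
  match p, q with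
  | None, None => 0
  | Some x, None => d (projT2 (sval x)) (base (projT1 (sval x)))
  | None, Some y => d (base (projT1 (sval y))) (projT2 (sval y))
  | Some x, Some y =>
      let i := projT1 (sval x) in let j := projT1 (sval y) in
      match pselect (i = j) with
      | left e => d (eq_rect i M (projT2 (sval x)) j e) (projT2 (sval y))
      | right _ => d (projT2 (sval x)) (base i) + d (base j) (projT2 (sval y))
      end
  end.

End MetricSum.

Arguments msum_dist {I M} d base p q.
Arguments msum_base {I M} base.

(* On the metric sum, d(p, q) = d(p, 0) + d(0, q) for points in different
   summands, so a map is c-Lipschitz as soon as all its restrictions to the
   summands are, and the Lipschitz norm of F is the supremum of the norms of
   its restrictions.

   (a) -> (b): choose a summand M_i on which F almost has norm N := |F|,
   approximate F on M_i by a norm attaining g, and glue g on M_i with t F on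
   the other summands, where t N = N - r <= |g| for the target accuracy r.
   The glued map has norm |g|, attains it along the sequences for g, and is
   r-close to F because (1 - t) N = r.

   (b) -> (a): extend f by 0 outside M_i and approximate the extension F by a
   norm attaining G with e := |F - G| < N := |G|.  Difference quotients of G
   between points outside M_i have norm at most e, and a quotient across the
   base point is a convex combination of a quotient inside M_i and one outside.
   Hence every quotient of G is within (N + e) / (N - e) * (N - |quotient|) of
   a quotient of G on M_i, so the restriction of G to M_i attains its norm
   toward the same vector. *)

From Pilot Require Import Defs.
From HB Require Import structures.
From mathcomp Require Import all_boot all_order all_algebra.
From mathcomp Require Import all_classical all_reals all_analysis.
From mathcomp Require Import Rstruct Rstruct_topology ring lra.
Set Implicit Arguments. Unset Strict Implicit. Unset Printing Implicit Defensive.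
Import Order.TTheory GRing.Theory Num.Theory.
Import numFieldNormedType.Exports.
Local Open Scope classical_set_scope.
Local Open Scope ring_scope.

(* [lipnorm] is a [sup], meaningless for a space with a single point. *)
Definition nontrivial_dist (T : Type) (d : T -> T -> RR) : Prop :=
  [/\ forall p q, 0 <= d p q, forall p q, p <> q -> 0 < d p q
    & exists p q : T, p <> q].

Section Lipschitz.
Variables (T : Type) (d : T -> T -> RR) (Y : normedModType RR).
Hypothesis d_nontrivial : nontrivial_dist d.

Let d_ge0 p q : 0 <= d p q. Proof. by case: d_nontrivial. Qed.
Let d_gt0 p q : p <> q -> 0 < d p q. Proof. by case: d_nontrivial => _ + _; apply. Qed.
Let two_points : exists p q : T, p <> q. Proof. by case: d_nontrivial. Qed.

Definition is_lipschitz (f : T -> Y) :=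
  exists L : RR, forall p q, `|f p - f q| <= L * d p q.

Definition diff_quot (f : T -> Y) (p q : T) : Y := (d p q)^-1 *: (f p - f q).

Lemma lipnorm_le (f : T -> Y) (c : RR) :
  (forall p q, `|f p - f q| <= c * d p q) -> lipnorm d f <= c.
Proof.
move=> hc; apply: ge_sup.
  by case: two_points => p [q pq]; exists (`|f p - f q| / d p q), p, q.
by move=> _ [p [q [pq ->]]]; rewrite ler_pdivrMr ?d_gt0.
Qed.

Lemma slope_le_lipnorm (f : T -> Y) (p q : T) : is_lipschitz f -> p <> q ->
  `|f p - f q| / d p q <= lipnorm d f.
Proof.
case=> L hL pq; apply: sup_upper_bound; last by exists p, q.
split; first by exists (`|f p - f q| / d p q), p, q.
by exists L => _ [x [z [xz ->]]]; rewrite ler_pdivrMr ?d_gt0.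
Qed.

Lemma lipnorm_ge0 (f : T -> Y) : is_lipschitz f -> 0 <= lipnorm d f.
Proof.
move=> hf; case: two_points => p [q pq].
by apply: le_trans (slope_le_lipnorm hf pq); rewrite divr_ge0.
Qed.

Lemma lipnorm_bound (f : T -> Y) : is_lipschitz f ->
  forall p q, `|f p - f q| <= lipnorm d f * d p q.
Proof.
move=> hf p q; have [->|pq] := pselect (p = q).
  by rewrite subrr normr0 mulr_ge0 ?lipnorm_ge0.
by rewrite -ler_pdivrMr ?d_gt0 ?slope_le_lipnorm.
Qed.

Lemma lipnorm_boundZ (f : T -> Y) (s : RR) : 0 <= s -> is_lipschitz f ->
  forall p q, `|s *: f p - s *: f q| <= s * lipnorm d f * d p q.
Proof.
move=> s_ge0 hf p q; rewrite -scalerBr normrZ ger0_norm // -mulrA.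
by apply: ler_wpM2l => //; apply: lipnorm_bound.
Qed.

Lemma norm_diff_quot_bound (f : T -> Y) (p q : T) (c : RR) : p <> q ->
  `|f p - f q| <= c * d p q -> `|diff_quot f p q| <= c.
Proof. by move=> pq hc; rewrite normrZ normfV ger0_norm // mulrC ler_pdivrMr ?d_gt0. Qed.

Lemma norm_diff_quot_le (f : T -> Y) (p q : T) : is_lipschitz f -> p <> q ->
  `|diff_quot f p q| <= lipnorm d f.
Proof. by move=> hf pq; apply: norm_diff_quot_bound => //; apply: lipnorm_bound. Qed.

Lemma diff_quotC (f : T -> Y) (p q : T) : d p q = d q p ->
  diff_quot f q p = - diff_quot f p q.
Proof. by move=> dC; rewrite /diff_quot dC -scalerN opprB. Qed.

Lemma diff_subr (f g : T -> Y) (p q : T) :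
  (f - g) p - (f - g) q = (f p - f q) - (g p - g q).
Proof. by rewrite /= !opprD addrACA. Qed.

Lemma lipschitzB (f g : T -> Y) : is_lipschitz f -> is_lipschitz g ->
  is_lipschitz (f - g).
Proof.
move=> hf hg; exists (lipnorm d f + lipnorm d g) => p q.
rewrite diff_subr mulrDl; apply: le_trans (ler_normB _ _) _.
by apply: lerD; apply: lipnorm_bound.
Qed.

Lemma lipnorm_triangle (f g : T -> Y) : is_lipschitz f -> is_lipschitz g ->
  lipnorm d f <= lipnorm d g + lipnorm d (f - g).
Proof.
move=> hf hg; apply: lipnorm_le => p q.
have -> : f p - f q = (g p - g q) + ((f - g) p - (f - g) q).
  by rewrite diff_subr [RHS]addrC subrK.
rewrite mulrDl; apply: le_trans (ler_normD _ _) _.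
by apply: lerD; apply: lipnorm_bound => //; apply: lipschitzB.
Qed.

Lemma lipnorm_ge_limit (f : T -> Y) (p q : nat -> T) (y : Y) :
  is_lipschitz f -> (forall n, p n <> q n) ->
  (fun n => diff_quot f (p n) (q n)) @ \oo --> y -> `|y| <= lipnorm d f.
Proof.
move=> hf pq /cvg_norm lim_norm.
apply: (closed_cvg [set r | r <= lipnorm d f] (@closed_le _ _) _ _ lim_norm).
by apply: nearW => n; apply: norm_diff_quot_le.
Qed.

Lemma NA_approx_small (t0 : T) (f : T -> Y) (eps : RR) : lipnorm d f < eps ->
  exists g, NA d t0 g /\ lipnorm d (f - g) < eps.
Proof.
move=> small; exists (fun=> 0); rewrite subr0; split => //.
have zero_lip : is_lipschitz (fun=> 0 : Y).
  by exists 0 => p q; rewrite subrr normr0 mul0r.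
split => //; exists 0; case: two_points => p [q pq].
exists (fun=> p), (fun=> q); split => //; split.
  by rewrite subrr scaler0; apply: cvg_cst.
rewrite normr0; apply/le_anti; rewrite lipnorm_ge0 //=.
by apply: lipnorm_le => x z; rewrite subrr normr0 mul0r.
Qed.

End Lipschitz.

Section Contraction.
Variables (T1 T2 : Type) (d1 : T1 -> T1 -> RR) (d2 : T2 -> T2 -> RR).
Variables (Y : normedModType RR) (phi : T1 -> T2).
Hypothesis d2_nontrivial : nontrivial_dist d2.
Hypothesis phi_contraction : forall x z, d2 (phi x) (phi z) <= d1 x z.

Lemma lipnorm_bound_comp (f : T2 -> Y) : is_lipschitz d2 f ->
  forall x z, `|f (phi x) - f (phi z)| <= lipnorm d2 f * d1 x z.
Proof.
move=> hf x z; apply: le_trans (lipnorm_bound d2_nontrivial hf _ _) _.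
by apply: ler_wpM2l; [apply: lipnorm_ge0 | apply: phi_contraction].
Qed.

Lemma lipschitz_comp (f : T2 -> Y) : is_lipschitz d2 f ->
  is_lipschitz d1 (fun x => f (phi x)).
Proof. by move=> hf; exists (lipnorm d2 f); apply: lipnorm_bound_comp. Qed.

Hypothesis d1_nontrivial : nontrivial_dist d1.

Lemma lipnorm_comp_le (f : T2 -> Y) : is_lipschitz d2 f ->
  lipnorm d1 (fun x => f (phi x)) <= lipnorm d2 f.
Proof. by move=> hf; apply: lipnorm_le => //; apply: lipnorm_bound_comp. Qed.

End Contraction.

Lemma norm_convex_comb_subr_le (Y : normedModType RR) (u v : Y) (t N e : RR) :
  0 <= t -> t <= 1 -> e < N -> `|u| <= N -> `|v| <= e ->
  `|((1 - t) *: u + t *: v) - u| <= (N + e) / (N - e) * (N - `|(1 - t) *: u + t *: v|).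
Proof.
(* w - u = t (v - u) has norm at most t (N + e), while |w| <= N - t (N - e). *)
move=> t_ge0 t_le1 e_lt_N u_le v_le.
have e_ge0 : 0 <= e := le_trans (normr_ge0 v) v_le.
have -> : (1 - t) *: u + t *: v - u = t *: (v - u).
  by rewrite scalerBl scale1r scalerBr addrAC [X in X + _]addrAC subrr add0r addrC.
set w := (1 - t) *: u + t *: v.
have w_le : `|w| <= N - t * (N - e).
  apply: le_trans (ler_normD _ _) _; rewrite !normrZ !ger0_norm ?subr_ge0 //.
  have : (1 - t) * `|u| <= (1 - t) * N by apply: ler_wpM2l; rewrite ?subr_ge0.
  have : t * `|v| <= t * e by apply: ler_wpM2l.
  lra.
have vu_le : `|v - u| <= N + e.
  by apply: le_trans (ler_normB _ _) _; rewrite addrC; apply: lerD.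
have Ne_gt0 : 0 < N - e by rewrite subr_gt0.
rewrite normrZ ger0_norm //.
apply: le_trans (_ : t * (N + e) <= _); first exact: ler_wpM2l.
have Ne_ge0 : 0 <= N + e by lra.
rewrite mulrAC ler_pdivlMr //; nra.
Qed.

Lemma cvg_of_norm_defect (Y : normedModType RR) (u v : nat -> Y) (y : Y) (C : RR) :
  0 <= C -> u @ \oo --> y -> (forall n, `|u n - v n| <= C * (`|y| - `|u n|)) ->
  v @ \oo --> y.
Proof.
move=> C_ge0 /cvgrPdist_lt u_y uv; apply/cvgrPdist_lt => eps eps_gt0.
have : 0 < eps / (1 + C) by rewrite divr_gt0 // ltr_wpDr.
move=> /u_y; apply: filterS => n yu_lt.
have defect : `|u n - v n| <= C * `|y - u n|.
  by apply: le_trans (uv n) _; apply: ler_wpM2l => //; apply: lerB_dist.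
have : `|y - u n| * (1 + C) < eps by rewrite -ltr_pdivlMr // ltr_wpDr.
by move: (ler_distD (u n) y (v n)); lra.
Qed.

Section MetricSum.
Variables (I : Type) (M : I -> Type) (d : forall i, M i -> M i -> RR).
Variable base : forall i, M i.
Hypothesis d_metric : forall i, is_metric (@d i).
Hypothesis I_inhabited : inhabited I.

Local Notation S := (Defs.msum base).
Local Notation D := (msum_dist d base).

Lemma d_ge0 i (x z : M i) : 0 <= d x z.
Proof. by have [] := d_metric i. Qed.

Lemma d_xx i (x : M i) : d x x = 0.
Proof. by have [_ [d0 _]] := d_metric i; apply/d0. Qed.

Lemma d_gt0 i (x z : M i) : x <> z -> 0 < d x z.
Proof.
have [_ [d0 _]] := d_metric i.
by move=> xz; rewrite lt0r d_ge0 andbT; apply/eqP => /d0.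
Qed.

Lemma d_sym i (x z : M i) : d x z = d z x.
Proof. by have [_ [_ []]] := d_metric i. Qed.

Lemma d_triangle i (x y z : M i) : d x z <= d x y + d y z.
Proof. by have [_ [_ [_ ]]] := d_metric i. Qed.

Definition msum_inj i (x : M i) : S :=
  match pselect (x = base i) with
  | left _ => None
  | right nx => Some (exist (fun z : {i : I & M i} => projT2 z <> base (projT1 z))
                           (existT M i x) nx)
  end.

Definition msum_proj i (p : S) : M i :=
  match p with
  | None => base i
  | Some s => match pselect (projT1 (sval s) = i) with
              | left e => eq_rect _ M (projT2 (sval s)) i e
              | right _ => base i
              end
  end.

Definition in_summand i (p : S) : Prop :=
  if p is Some s then projT1 (sval s) = i else True.

Lemma msum_injK i : cancel (@msum_inj i) (msum_proj i).
Proof.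
move=> x; rewrite /msum_inj; case: pselect => [->//|nx] /=.
by case: pselect => [e|/(_ erefl)//]; rewrite (Prop_irrelevance e erefl).
Qed.

Lemma msum_projK i p : in_summand i p -> msum_inj (msum_proj i p) = p.
Proof.
case: p => [[[j x] nx]|] /=; last by rewrite /msum_inj; case: pselect.
move=> ji; subst j; case: pselect => [e|/(_ erefl)//].
rewrite (Prop_irrelevance e erefl) /= /msum_inj; case: pselect => // nx'.
by rewrite (Prop_irrelevance nx' nx).
Qed.

Lemma in_summand_inj i (x : M i) : in_summand i (msum_inj x).
Proof. by rewrite /msum_inj; case: pselect. Qed.

Lemma in_summand_base i : in_summand i None.
Proof. by []. Qed.

Lemma msum_inj_base i : msum_inj (base i) = None.
Proof. by rewrite /msum_inj; case: pselect. Qed.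

Lemma msum_proj_other i p : ~ in_summand i p -> msum_proj i p = base i.
Proof. by case: p => [[[j x] nx]|] //= ji; rewrite /msum_proj /=; case: pselect. Qed.

Lemma msum_proj_neq_base i p : in_summand i p -> p <> None -> msum_proj i p <> base i.
Proof. by move=> ip pN e; apply: pN; rewrite -(msum_projK ip) e msum_inj_base. Qed.

Lemma in_summand_uniq i j p : in_summand i p -> in_summand j p -> p <> None -> i = j.
Proof. by case: p => [[[k x] nx]|] //= <- <-. Qed.

Lemma in_summand_exists p : exists i, in_summand i p.
Proof. by case: p => [[[j x] nx]|]; [exists j | case: I_inhabited => i; exists i]. Qed.

Lemma msum_dist_summand i p q : in_summand i p -> in_summand i q ->
  D p q = d (msum_proj i p) (msum_proj i q).
Proof.
have pselect_refl : pselect (i = i) = left erefl.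
  by case: pselect => [e|/(_ erefl)//]; rewrite (Prop_irrelevance e erefl).
case: p => [[[j x] nx]|]; case: q => [[[k z] nz]|] //=; try move=> ji; try move=> ki;
  subst; rewrite /msum_dist /msum_proj /= ?pselect_refl ?d_xx //.
Qed.

Lemma msum_dist_inj i (x z : M i) : D (msum_inj x) (msum_inj z) = d x z.
Proof. by rewrite (msum_dist_summand (in_summand_inj x) (in_summand_inj z)) !msum_injK. Qed.

Lemma msum_dist_split p q : (exists i, in_summand i p /\ in_summand i q) \/
  [/\ p <> None, q <> None & D p q = D p None + D None q].
Proof.
case: p => [[[j x] nx]|]; last by have [i iq] := in_summand_exists q; left; exists i.
case: q => [[[k z] nz]|]; last by left; exists j.
have [jk|jk] := pselect (j = k); first by left; exists k; split.
by right; split => //; rewrite /msum_dist /=; case: pselect.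
Qed.

Lemma msum_dist_ge0 p q : 0 <= D p q.
Proof.
have [[i [ip iq]]|[_ _ ->]] := msum_dist_split p q.
  by rewrite (msum_dist_summand ip iq) d_ge0.
have [i ip] := in_summand_exists p; have [j jq] := in_summand_exists q.
rewrite (msum_dist_summand ip (in_summand_base i)).
by rewrite (msum_dist_summand (in_summand_base j) jq) addr_ge0 ?d_ge0.
Qed.

Lemma msum_dist_gt0 p q : p <> q -> 0 < D p q.
Proof.
move=> pq; have [[i [ip iq]]|[pN qN ->]] := msum_dist_split p q.
  rewrite (msum_dist_summand ip iq) d_gt0 // => e; apply: pq.
  by rewrite -(msum_projK ip) -(msum_projK iq) e.
have [i ip] := in_summand_exists p; have [j jq] := in_summand_exists q.
rewrite (msum_dist_summand ip (in_summand_base i)).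
rewrite (msum_dist_summand (in_summand_base j) jq).
apply: addr_gt0; apply: d_gt0; first exact: msum_proj_neq_base.
by move/esym; apply: msum_proj_neq_base.
Qed.

Lemma msum_distC p q : D p q = D q p.
Proof.
have [[i [ip iq]]|nsame] := pselect (exists i, in_summand i p /\ in_summand i q).
  by rewrite (msum_dist_summand ip iq) (msum_dist_summand iq ip) d_sym.
have [[i [ip iq]]|[_ _ ->]] := msum_dist_split p q; first by case: nsame; exists i.
have [[i [iq ip]]|[_ _ ->]] := msum_dist_split q p; first by case: nsame; exists i.
have [i ip] := in_summand_exists p; have [j jq] := in_summand_exists q.
rewrite (msum_dist_summand ip (in_summand_base i)) (msum_dist_summand (in_summand_base i) ip).
rewrite (msum_dist_summand jq (in_summand_base j)) (msum_dist_summand (in_summand_base j) jq).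
by rewrite addrC d_sym [d (msum_proj i p) _]d_sym.
Qed.

Lemma msum_proj_base_other i j p : in_summand j p -> j <> i -> msum_proj i p = base i.
Proof.
move=> jp ji; have [->//|pN] := pselect (p = None).
by apply: msum_proj_other => ip; apply: ji; apply: in_summand_uniq jp ip pN.
Qed.

Lemma msum_proj_dist_base i p : d (msum_proj i p) (base i) <= D p None.
Proof.
have [ip|nip] := pselect (in_summand i p).
  by rewrite (msum_dist_summand ip (in_summand_base i)).
by rewrite msum_proj_other // d_xx msum_dist_ge0.
Qed.

Lemma msum_proj_contraction i p q : d (msum_proj i p) (msum_proj i q) <= D p q.
Proof.
have [[j [jp jq]]|[_ _ ->]] := msum_dist_split p q.
  have [ji|ji] := pselect (j = i); first by subst j; rewrite (msum_dist_summand jp jq).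
  by rewrite !(msum_proj_base_other _ ji) // d_xx msum_dist_ge0.
apply: le_trans (d_triangle _ (base i) _) _.
by rewrite lerD // ?msum_proj_dist_base // d_sym msum_distC msum_proj_dist_base.
Qed.

Lemma lipschitz_bound_msum (Y : normedModType RR) (H : S -> Y) (c : RR) :
  (forall i p q, in_summand i p -> in_summand i q -> `|H p - H q| <= c * D p q) ->
  forall p q, `|H p - H q| <= c * D p q.
Proof.
move=> hc p q; have [[i [ip iq]]|[_ _ ->]] := msum_dist_split p q; first exact: hc ip iq.
have [i ip] := in_summand_exists p; have [j jq] := in_summand_exists q.
apply: le_trans (ler_distD (H None) _ _) _.
rewrite mulrDr; apply: lerD; first exact: hc ip (in_summand_base i).
exact: hc (in_summand_base j) jq.
Qed.

Hypothesis summand_nontrivial : forall i, exists x : M i, x <> base i.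

Lemma d_nontrivial i : nontrivial_dist (@d i).
Proof.
split; [exact: d_ge0 | exact: d_gt0 |].
by have [x nx] := summand_nontrivial i; exists x, (base i).
Qed.

Lemma msum_nontrivial : nontrivial_dist D.
Proof.
split; [exact: msum_dist_ge0 | exact: msum_dist_gt0 |].
case: I_inhabited => i; have [x nx] := summand_nontrivial i.
by exists (msum_inj x), None => /(congr1 (msum_proj i)); rewrite msum_injK.
Qed.

Lemma msum_inj_contraction i (x z : M i) : D (msum_inj x) (msum_inj z) <= d x z.
Proof. by rewrite msum_dist_inj. Qed.

Variable Y : normedModType RR.

Lemma lipschitz_msum_inj i (F : S -> Y) : is_lipschitz D F ->
  is_lipschitz (@d i) (fun x => F (msum_inj x)).
Proof. exact: (lipschitz_comp msum_nontrivial (@msum_inj_contraction i)). Qed.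

Lemma lipnorm_msum_inj_le i (F : S -> Y) : is_lipschitz D F ->
  lipnorm (@d i) (fun x => F (msum_inj x)) <= lipnorm D F.
Proof. exact: (lipnorm_comp_le msum_nontrivial (@msum_inj_contraction i) (d_nontrivial i)). Qed.

Lemma lipnorm_msum_le (F : S -> Y) (c : RR) : is_lipschitz D F ->
  (forall i, lipnorm (@d i) (fun x => F (msum_inj x)) <= c) -> lipnorm D F <= c.
Proof.
move=> hF hc; apply: (lipnorm_le msum_nontrivial).
apply: lipschitz_bound_msum => i p q ip iq.
rewrite (msum_dist_summand ip iq) -{1}(msum_projK ip) -{1}(msum_projK iq).
have hFi := lipschitz_msum_inj i hF.
apply: le_trans (lipnorm_bound (d_nontrivial i) hFi _ _) _.
by apply: ler_wpM2r; [apply: d_ge0 | apply: hc].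
Qed.

Lemma diff_quot_msum_split (G : S -> Y) p q : p <> None -> q <> None ->
  D p q = D p None + D None q ->
  diff_quot D G p q = (1 - D None q / D p q) *: diff_quot D G p None
                      + (D None q / D p q) *: diff_quot D G None q.
Proof.
move=> pN qN Dpq; rewrite /diff_quot Dpq.
have a_gt0 : 0 < D p None := msum_dist_gt0 pN.
have b_gt0 : 0 < D None q by apply: msum_dist_gt0 => /esym.
have ab_neq0 : D p None + D None q != 0 by rewrite gt_eqF ?addr_gt0.
have -> : 1 - D None q / (D p None + D None q) = D p None / (D p None + D None q).
  by field.
rewrite !scalerA [D p None / _ * _]mulrAC [D None q / _ * _]mulrAC.
rewrite !mulfV ?gt_eqF // !mul1r -scalerDr.
by rewrite addrA subrK.
Qed.

Section NearSummand.
Variables (i : I) (F G : S -> Y).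
Hypothesis F_off : forall p, ~ in_summand i p -> F p = 0.
Hypothesis F_base : F None = 0.
Hypothesis G_base : G None = 0.
Hypothesis F_lip : is_lipschitz D F.
Hypothesis G_lip : is_lipschitz D G.

Local Notation g := (fun x : M i => G (msum_inj x)).
Local Notation N := (lipnorm D G).
Local Notation e := (lipnorm D (F - G)).
Local Notation C := ((N + e) / (N - e)).

Hypothesis e_lt_N : e < N.

Let FG_lip : is_lipschitz D (F - G). Proof. exact: (lipschitzB msum_nontrivial F_lip G_lip). Qed.

Let C_ge0 : 0 <= C.
Proof.
have e_ge0 : 0 <= e := lipnorm_ge0 msum_nontrivial FG_lip.
apply: divr_ge0; first exact: addr_ge0 (le_trans e_ge0 (ltW e_lt_N)) e_ge0.
by rewrite subr_ge0 ltW.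
Qed.

Lemma norm_diff_quot_off p q : p <> q -> F p = 0 -> F q = 0 ->
  `|diff_quot D G p q| <= e.
Proof.
move=> pq Fp Fq; apply: (norm_diff_quot_bound msum_nontrivial pq).
have := lipnorm_bound msum_nontrivial FG_lip p q.
by rewrite diff_subr Fp Fq subrr sub0r normrN.
Qed.

Lemma norm_diff_quot_summand_le (x z : M i) : x <> z -> `|diff_quot (@d i) g x z| <= N.
Proof.
move=> xz; apply: (norm_diff_quot_bound (d_nontrivial i) xz).
by rewrite /= -msum_dist_inj; apply: (lipnorm_bound msum_nontrivial G_lip).
Qed.

Lemma diff_quot_near_summand_off p q : p <> q -> F p = 0 -> F q = 0 ->
  exists x z : M i, x <> z /\
    `|diff_quot D G p q - diff_quot (@d i) g x z| <= C * (N - `|diff_quot D G p q|).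
Proof.
move=> pq Fp Fq; have [x nx] := summand_nontrivial i; exists x, (base i); split => //.
have := norm_convex_comb_subr_le ler01 (lexx 1) e_lt_N (norm_diff_quot_summand_le nx)
  (norm_diff_quot_off pq Fp Fq).
by rewrite subrr scale0r add0r scale1r.
Qed.

Lemma diff_quot_near_summand_across p q : in_summand i p -> p <> None -> ~ in_summand i q ->
  exists x z : M i, x <> z /\
    `|diff_quot D G p q - diff_quot (@d i) g x z| <= C * (N - `|diff_quot D G p q|).
Proof.
move=> ip pN niq.
have qN : q <> None by move=> qN; apply: niq; rewrite qN.
have Dpq : D p q = D p None + D None q.
  have [[j [jp jq]]|[_ _ //]] := msum_dist_split p q.
  by case: niq; rewrite (in_summand_uniq ip jp pN).
have Dpq_gt0 : 0 < D p q by apply: msum_dist_gt0 => pq; apply: niq; rewrite -pq.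
exists (msum_proj i p), (base i); split; first exact: msum_proj_neq_base.
have -> : diff_quot (@d i) g (msum_proj i p) (base i) = diff_quot D G p None.
  by rewrite /diff_quot -msum_dist_inj (msum_projK ip) msum_inj_base.
rewrite diff_quot_msum_split //; apply: norm_convex_comb_subr_le => //.
- by rewrite divr_ge0 ?msum_dist_ge0.
- by rewrite ler_pdivrMr // mul1r Dpq lerDr msum_dist_ge0.
- exact: (norm_diff_quot_le msum_nontrivial G_lip pN).
- by apply: norm_diff_quot_off; [move/esym | | apply: F_off].
Qed.

Lemma diff_quot_near_summand p q : p <> q ->
  exists x z : M i, x <> z /\
    `|diff_quot D G p q - diff_quot (@d i) g x z| <= C * (N - `|diff_quot D G p q|).
Proof.
move=> pq.
have [ip|nip] := pselect (in_summand i p); have [iq|niq] := pselect (in_summand i q).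
- exists (msum_proj i p), (msum_proj i q); split.
    by move=> pq'; apply: pq; rewrite -(msum_projK ip) -(msum_projK iq) pq'.
  have -> : diff_quot (@d i) g (msum_proj i p) (msum_proj i q) = diff_quot D G p q.
    by rewrite /diff_quot -msum_dist_inj !msum_projK.
  by rewrite subrr normr0 mulr_ge0 // subr_ge0 (norm_diff_quot_le msum_nontrivial G_lip pq).
- have [pN|pN] := pselect (p = None).
    by apply: diff_quot_near_summand_off => //; [rewrite pN | apply: F_off].
  exact: diff_quot_near_summand_across.
- have [qN|qN] := pselect (q = None).
    by apply: diff_quot_near_summand_off => //; [apply: F_off | rewrite qN].
  have [x [z [xz near]]] := diff_quot_near_summand_across iq qN nip.
  exists z, x; split; first by move/esym.
  move: near; rewrite (diff_quotC _ (msum_distC p q)) (diff_quotC g (d_sym z x)).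
  by rewrite -opprD !normrN.
- by apply: diff_quot_near_summand_off => //; apply: F_off.
Qed.

Lemma NA_summand_restriction : NA D None G -> NA (@d i) (base i) g.
Proof.
move=> [_ [y [ps [qs [pq [cvg_y norm_y]]]]]].
have g_lip : is_lipschitz (@d i) g := lipschitz_msum_inj i G_lip.
have [xs /choice[zs near]] := choice (fun n => diff_quot_near_summand (pq n)).
have cvg_g : (fun n => diff_quot (@d i) g (xs n) (zs n)) @ \oo --> y.
  by apply: (cvg_of_norm_defect C_ge0 cvg_y) => n; rewrite norm_y; case: (near n).
split; first by split; [rewrite /= msum_inj_base | exact: g_lip].
have xz n : xs n <> zs n by case: (near n).
exists y, xs, zs; split; first exact: xz.
split; first exact: cvg_g.
apply/le_anti; rewrite (lipnorm_ge_limit (d_nontrivial i) g_lip xz cvg_g) /=.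
apply: le_trans (lipnorm_msum_inj_le i G_lip) _.
by rewrite -norm_y.
Qed.

End NearSummand.

Lemma NA_dense_summand i : NA_dense D None Y -> NA_dense (@d i) (base i) Y.
Proof.
move=> hS f [f0 f_lip] eps eps_gt0.
have [small|large] := ltP (lipnorm (@d i) f) eps.
  exact: (NA_approx_small (d_nontrivial i) _ small).
pose F p := f (msum_proj i p).
have F_lip : is_lipschitz D F.
  exact: (lipschitz_comp (d_nontrivial i) (@msum_proj_contraction i) f_lip).
have F_off p : ~ in_summand i p -> F p = 0 by move=> nip; rewrite /F msum_proj_other.
have F_inj : (fun x => F (msum_inj x)) = f by apply: funext => x; rewrite /F msum_injK.
have eps3_gt0 : 0 < eps / 3 by rewrite divr_gt0.
have [G [G_NA FG_lt]] := hS F (conj f0 F_lip) _ eps3_gt0.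
have [[G0 G_lip] _] := G_NA.
have e_lt_N : lipnorm D (F - G) < lipnorm D G.
  have : lipnorm (@d i) f <= lipnorm D F.
    by rewrite -{1}F_inj; apply: lipnorm_msum_inj_le.
  have := lipnorm_triangle msum_nontrivial F_lip G_lip.
  lra.
exists (fun x => G (msum_inj x)); split.
  exact: (NA_summand_restriction F_off f0 G0 F_lip G_lip e_lt_N G_NA).
apply: le_lt_trans (_ : _ <= lipnorm D (F - G)) _; last lra.
rewrite -{1}F_inj.
exact/lipnorm_msum_inj_le/(lipschitzB msum_nontrivial F_lip G_lip).
Qed.

Definition msum_patch i (g : M i -> Y) (H : S -> Y) (p : S) : Y :=
  if pselect (in_summand i p) then g (msum_proj i p) else H p.

Lemma msum_patch_in i g H p : in_summand i p -> @msum_patch i g H p = g (msum_proj i p).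
Proof. by rewrite /msum_patch; case: pselect. Qed.

Lemma msum_patch_other i j g H p : g (base i) = H None ->
  in_summand j p -> j <> i -> @msum_patch i g H p = H p.
Proof.
move=> gH jp ji; have [->|pN] := pselect (p = None).
  by rewrite /msum_patch; case: pselect.
rewrite /msum_patch; case: pselect => // ip.
by case: ji; apply: in_summand_uniq jp ip pN.
Qed.

Lemma lipschitz_bound_msum_patch i g H (c : RR) : g (base i) = H None ->
  (forall x z, `|g x - g z| <= c * d x z) ->
  (forall j p q, j <> i -> in_summand j p -> in_summand j q ->
     `|H p - H q| <= c * D p q) ->
  forall p q, `|@msum_patch i g H p - msum_patch g H q| <= c * D p q.
Proof.
move=> gH g_lip H_lip; apply: lipschitz_bound_msum => j p q jp jq.
have [ji|ji] := pselect (j = i).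
  by subst j; rewrite !msum_patch_in // (msum_dist_summand jp jq); apply: g_lip.
by rewrite (msum_patch_other gH jp ji) (msum_patch_other gH jq ji); exact: H_lip ji jp jq.
Qed.

Lemma NA_msum_of_summand i (G : S -> Y) : G None = 0 -> is_lipschitz D G ->
  lipnorm D G <= lipnorm (@d i) (fun x => G (msum_inj x)) ->
  NA (@d i) (base i) (fun x => G (msum_inj x)) -> NA D None G.
Proof.
move=> G0 G_lip G_le [_ [y [xs [zs [xz [cvg_y norm_y]]]]]].
split => //; exists y, (fun n => msum_inj (xs n)), (fun n => msum_inj (zs n)); split.
  by move=> n /(congr1 (msum_proj i)); rewrite !msum_injK; apply: xz.
split; first by under eq_fun do rewrite msum_dist_inj.
rewrite norm_y; apply/le_anti; rewrite G_le andbT.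
exact: (lipnorm_msum_inj_le i G_lip).
Qed.

Lemma NA_msum_patch_approx i (F : S -> Y) (g : M i -> Y) (r : RR) :
  F None = 0 -> is_lipschitz D F -> NA (@d i) (base i) g ->
  0 < r -> r <= lipnorm D F -> lipnorm D F - r <= lipnorm (@d i) g ->
  lipnorm (@d i) ((fun x => F (msum_inj x)) - g) <= r ->
  exists G, NA D None G /\ lipnorm D (F - G) <= r.
Proof.
move=> F0 F_lip g_NA r_gt0 r_le g_large fg_le.
have [[g0 g_lip] _] := g_NA.
set N := lipnorm D F in r_le g_large; set a := lipnorm (@d i) g in g_large.
pose f := fun x : M i => F (msum_inj x).
have f_lip : is_lipschitz (@d i) f := lipschitz_msum_inj i F_lip.
pose t := (N - r) / N.
have N_gt0 : 0 < N := lt_le_trans r_gt0 r_le.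
have tN : t * N = N - r by rewrite /t divfK // gt_eqF.
have t_ge0 : 0 <= t by apply: divr_ge0; [rewrite subr_ge0 | apply: ltW].
have t'N : (1 - t) * N = r by rewrite mulrBl mul1r tN opprB addrC subrK.
have t'_ge0 : 0 <= 1 - t by rewrite -(pmulr_lge0 _ N_gt0) t'N ltW.
pose G := msum_patch g (fun p => t *: F p).
have G0 : G None = 0 by rewrite /G (msum_patch_in _ _ (in_summand_base i)) /= g0.
have G_lip p q : `|G p - G q| <= a * D p q.
  apply: lipschitz_bound_msum_patch => [|x z|j {}p {}q _ _ _].
  - by rewrite g0 F0 scaler0.
  - exact: (lipnorm_bound (d_nontrivial i) g_lip).
  - apply: le_trans (lipnorm_boundZ msum_nontrivial t_ge0 F_lip p q) _.
    by rewrite tN; apply: ler_wpM2r => //; apply: msum_dist_ge0.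
have G_inj : (fun x => G (msum_inj x)) = g.
  by apply: funext => x; rewrite /G (msum_patch_in _ _ (in_summand_inj x)) msum_injK.
exists G; split.
  apply: (NA_msum_of_summand (i := i)); rewrite ?G_inj //; first by exists a.
  exact: (lipnorm_le msum_nontrivial G_lip).
have -> : F - G = msum_patch (fun x => f x - g x) (fun p => (1 - t) *: F p).
  apply: funext => p.
  change (F p - G p = msum_patch (fun x => f x - g x) (fun p => (1 - t) *: F p) p).
  rewrite /G /msum_patch; case: pselect => ip; first by rewrite /f msum_projK.
  by rewrite scalerBl scale1r.
apply: (lipnorm_le msum_nontrivial); apply: lipschitz_bound_msum_patch => [|x z|j p q _ _ _].
- by rewrite /= g0 /f msum_inj_base F0 subr0 scaler0.
- have fg_lip := lipschitzB (d_nontrivial i) f_lip g_lip.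
  apply: le_trans (lipnorm_bound (d_nontrivial i) fg_lip x z) _.
  by apply: ler_wpM2r => //; apply: d_ge0.
- by rewrite -t'N; apply: (lipnorm_boundZ msum_nontrivial t'_ge0 F_lip).
Qed.

Lemma NA_dense_msum : (forall i, NA_dense (@d i) (base i) Y) -> NA_dense D None Y.
Proof.
move=> hM F [F0 F_lip] eps eps_gt0.
set N := lipnorm D F.
have [small|large] := ltP N eps; first exact: (NA_approx_small msum_nontrivial _ small).
have [i near_N] : exists i, N - eps / 4 < lipnorm (@d i) (fun x => F (msum_inj x)).
  apply/not_existsP => low; have : N <= N - eps / 4.
    by apply: lipnorm_msum_le => // i; rewrite leNgt; apply/negP/low.
  lra.
pose f := fun x : M i => F (msum_inj x).
have f_lip : is_lipschitz (@d i) f := lipschitz_msum_inj i F_lip.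
have f0 : f (base i) = 0 by rewrite /f msum_inj_base.
have eps4_gt0 : 0 < eps / 4 by rewrite divr_gt0.
have [g [g_NA fg_lt]] := hM i f (conj f0 f_lip) _ eps4_gt0.
have g_large : N - eps / 2 <= lipnorm (@d i) g.
  have := lipnorm_triangle (d_nontrivial i) f_lip g_NA.1.2; lra.
have r_gt0 : 0 < eps / 2 by lra.
have r_le : eps / 2 <= N by lra.
have fg_le : lipnorm (@d i) (f - g) <= eps / 2 by lra.
have [G [G_NA FG_le]] := NA_msum_patch_approx F0 F_lip g_NA r_gt0 r_le g_large fg_le.
by exists G; split => //; lra.
Qed.

End MetricSum.

Theorem theorem3p5 (I : Type) (M : I -> Type)
    (d : forall i, M i -> M i -> RR) (base : forall i, M i)
    (Y : completeNormedModType RR)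
    (hmet : forall i, is_metric (d i))
    (hcomp : forall i, is_complete (d i))
    (hnontriv : forall i, exists x : M i, x <> base i)
    (hI : inhabited I) :
  (forall i, NA_dense (d i) (base i) Y) <->
  NA_dense (msum_dist d base) (msum_base base) Y.
Proof.
split; first exact: NA_dense_msum.
by move=> hS i; apply: NA_dense_summand.
Qed.
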